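(* Let $F$ be a field of characteristic zero, $n,m$ natural numbers, and $l\in W(n,m)$ a nonzero element. Then the ideal of $W(n,m)$ generated by $l$ contains a nonzero element $l'$ such that in every basis element $e^{\alpha}x^{\beta}\partial_p$ occurring in $l'$ with nonzero coefficient, all components of $\beta$ are positive integers.
   Context: $W(n,m)$ has basis $e^{\alpha}x^{\beta}\partial_i$ ($\alpha\in\mathbb Z^n$, $\beta\in\mathbb Z^{n+m}$, $1\le i\le n+m$), realized as vector fields $f\partial_i$ with $f$ in the commutative algebra with basis $e^{\alpha}x^{\beta}$ (multiplication adding exponents), $\partial_i(e^{\alpha}x^{\beta})=a_ie^{\alpha}x^{\beta}+b_ie^{\alpha}x^{\beta-\epsilon_i}$ with $a_i:=0$ for $i>n$, and bracket $[f\partial_i,g\partial_j]=f\partial_i(g)\partial_j-g\partial_j(f)\partial_i$. *)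

From HB Require Import structures.
From mathcomp Require Import all_boot all_order all_algebra.
From mathcomp Require Import finmap.
From mathcomp.multinomials Require Import monalg.
Set Implicit Arguments. Unset Strict Implicit. Unset Printing Implicit Defensive.
Import Order.TTheory GRing.Theory Num.Theory.
Local Open Scope ring_scope.

(* Index of a basis element e^alpha x^beta d_i of W(n,m):
   alpha : Z^n, beta : Z^(n+m), i : 'I_(n+m)  (0-based: i = 0..n+m-1,
   corresponding to 1..n+m in the paper; "i <= n" in the paper = "i < n" here). *)
Definition Wkey (n m : nat) : choiceType :=
  ({ffun 'I_n -> int} * {ffun 'I_(n + m) -> int} * 'I_(n + m))%type.

Definition W (F : fieldType) (n m : nat) := {malg F[Wkey n m]}.

Section Bracket.
Variables (F : fieldType) (n m : nat).

Definition acomp (al : {ffun 'I_n -> int}) (i : 'I_(n + m)) : int :=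
  match insub (val i) : option 'I_n with Some j => al j | None => 0 end.

Definition eps (i : 'I_(n + m)) : {ffun 'I_(n + m) -> int} :=
  [ffun j => (j == i)%:Z].

Definition bas (c : F) (al : {ffun 'I_n -> int}) (be : {ffun 'I_(n + m) -> int})
  (i : 'I_(n + m)) : W F n m := << c *g ((al, be, i) : Wkey n m) >>.

(* (e^al x^be) d_i (e^ga x^de) d_j  =  a_i e^(al+ga) x^(be+de) d_j
                                     + b_i e^(al+ga) x^(be+de-eps_i) d_j,
   where ga = (a_k), de = (b_k). *)
Definition term_der (al : {ffun 'I_n -> int}) (be : {ffun 'I_(n + m) -> int}) (i : 'I_(n + m))
  (ga : {ffun 'I_n -> int}) (de : {ffun 'I_(n + m) -> int}) (j : 'I_(n + m)) : W F n m :=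
  bas ((acomp ga i)%:~R) (al + ga) (be + de) j
  + bas ((de i)%:~R) (al + ga) (be + de - eps i) j.

(* bracket of two basis elements:
   [f d_i, g d_j] = f d_i(g) d_j - g d_j(f) d_i *)
Definition brkey (k1 k2 : Wkey n m) : W F n m :=
  let: (al, be, i) := k1 in let: (ga, de, j) := k2 in
  term_der al be i ga de j - term_der ga de j al be i.

Definition bracket (u v : W F n m) : W F n m :=
  \sum_(k1 <- msupp u) \sum_(k2 <- msupp v) (u@_k1 * v@_k2) *: brkey k1 k2.

Inductive in_ideal (l : W F n m) : W F n m -> Prop :=
  | ideal_gen : in_ideal l l
  | ideal_zero : in_ideal l 0
  | ideal_add u v : in_ideal l u -> in_ideal l v -> in_ideal l (u + v)
  | ideal_scale (c : F) u : in_ideal l u -> in_ideal l (c *: u)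
  | ideal_brl (w u : W F n m) : in_ideal l u -> in_ideal l (bracket w u)
  | ideal_brr (w u : W F n m) : in_ideal l u -> in_ideal l (bracket u w).

End Bracket.

From HB Require Import structures.
From mathcomp Require Import all_boot all_order all_algebra.
From mathcomp Require Import finmap zify ring.
From mathcomp.multinomials Require Import monalg.
Import Order.TTheory GRing.Theory Num.Theory.
Local Open Scope ring_scope.

(* Bracketing l with x^g d_j raises every x-exponent occurring in l by g, minus
   at most one, so if g exceeds every |exponent| of l by 2 the bracket has only
   positive x-exponents; it remains to see that some such bracket is nonzero.
   Pick a basis element e^al x^be d_j of l.  Replacing g by g + eps_j changes
   the coefficient of [x^g d_j, l] at e^al x^(be+g-eps_j) d_j only through the
   term -g_j e^al x^(be+g-eps_j) d_j of [x^g d_j, e^al x^be d_j], so the two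
   coefficients differ by exactly l_(al,be,j) != 0, and one of the brackets is
   nonzero.  The difference being a coefficient of l itself, the characteristic
   zero hypothesis is not needed. *)

Lemma exists_bound_seq {X : eqType} {T : finType} (s : seq X) (f : X -> T -> int) :
  exists B : nat, forall x, x \in s -> forall t, (`|f x t| <= B)%N.
Proof.
elim: s => [|y s [B IH]]; first by exists 0%N.
exists (B + \sum_t `|f y t|)%N => x; rewrite in_cons => /orP [/eqP -> | xs] t.
  by rewrite (bigD1 t) //= addnCA leq_addr.
exact: leq_trans (IH x xs t) (leq_addr _ _).
Qed.

Section Bracket.
Set Implicit Arguments. Unset Strict Implicit.
Variables (F : fieldType) (n m : nat).
Implicit Types (al : {ffun 'I_n -> int}) (be g : {ffun 'I_(n + m) -> int}).
Implicit Types (i j : 'I_(n + m)) (k K : Wkey n m) (l u v : W F n m).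

Lemma mcoeff_bas (c : F) al be i K :
  (bas c al be i)@_K = c *+ (((al, be, i) : Wkey n m) == K).
Proof. exact: mcoeffU. Qed.

Lemma msupp_bas (c : F) al be i K : K \in msupp (bas c al be i) -> K = (al, be, i).
Proof. by move/(fsubsetP msuppU_le); rewrite inE => /eqP. Qed.

Lemma msupp_term_der_ge al be i al' be' j K :
  K \in msupp (term_der F al be i al' be' j) ->
  forall t, be t + be' t - 1 <= K.1.2 t.
Proof.
rewrite /term_der => /(fsubsetP (msuppD_le _ _)).
rewrite inE => /orP [] /msupp_bas -> t /=; rewrite !ffunE.
all: by case: (t == i); move: (be t) (be' t) => x y; lia.
Qed.

Lemma msupp_brkey_ge k1 k2 K :
  K \in msupp (brkey F k1 k2) -> forall t, k1.1.2 t + k2.1.2 t - 1 <= K.1.2 t.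
Proof.
case: k1 k2 => [[al be] i] [[al' be'] j] /(fsubsetP (msuppB_le _ _)).
rewrite inE => /orP [] /msupp_term_der_ge //= ge_K t.
by rewrite [be t + _]addrC.
Qed.

Lemma mcoeff_bracket_bas1l al be i v K :
  (bracket (bas 1 al be i) v)@_K = \sum_(k <- msupp v) v@_k * (brkey F (al, be, i) k)@_K.
Proof.
rewrite /bracket /bas msuppU oner_eq0 big_seq_fset1 mcoeffUU raddf_sum.
by apply: eq_bigr => k _; rewrite /= mul1r mcoeffZ.
Qed.

Lemma msupp_bracket u v K : K \in msupp (bracket u v) ->
  exists k1 k2, [/\ k1 \in msupp u, k2 \in msupp v & K \in msupp (brkey F k1 k2)].
Proof.
rewrite -mcoeff_neq0 => bracket_K_neq0.
have : has (fun k1 => has (fun k2 => K \in msupp (brkey F k1 k2)) (msupp v)) (msupp u).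
  apply: contraNT bracket_K_neq0 => /hasPn K_out.
  rewrite raddf_sum big_seq big1 // => k1 k1u.
  rewrite raddf_sum big_seq big1 // => k2 k2v.
  have /hasPn/(_ k2 k2v) := K_out k1 k1u.
  by rewrite /= mcoeffZ -mcoeff_eq0 => /eqP ->; rewrite mulr0.
by case/hasP => k1 k1u /hasP [k2 k2v K_in]; exists k1, k2.
Qed.

Lemma msupp_bracket_ge u v (bu bv : int) K :
  (forall k t, k \in msupp u -> bu <= k.1.2 t) ->
  (forall k t, k \in msupp v -> bv <= k.1.2 t) ->
  K \in msupp (bracket u v) -> forall t, bu + bv - 1 <= K.1.2 t.
Proof.
move=> hu hv /msupp_bracket [k1 [k2 [k1u k2v /msupp_brkey_ge K_ge]]] t.
by have := hu k1 t k1u; have := hv k2 t k2v; have := K_ge t; lia.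
Qed.

Lemma mcoeff_brkey_xpow g j al be i al0 be0 :
  (brkey F (0, g, j) (al, be, i))@_(al0, be0 + g - eps j, j) =
    (acomp al j)%:~R *+ (((al, be, i) : Wkey n m) == (al0, be0 - eps j, j))
  + (be j)%:~R *+ (((al, be - eps j, i) : Wkey n m) == (al0, be0 - eps j, j))
  - (g i)%:~R *+ ((al, be - eps i) == (al0, be0 - eps j)).
Proof.
have eq_keyDr x b h y b' h' :
    (((x, b + g, h) : Wkey n m) == (y, b' + g, h')) = ((x, b, h) == (y, b', h')).
  by rewrite !xpair_eqE (inj_eq (addIr g)).
have acomp0 : acomp (0 : {ffun 'I_n -> int}) i = 0.
  by rewrite /acomp; case: insub => // ?; rewrite ffunE.
rewrite /brkey /term_der acomp0 mulr0z [bas 0 _ _ _]monalgU0 !add0r !addr0.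
rewrite [g + be]addrC !(addrAC be g) (addrAC be0 g) mcoeffB mcoeffD.
rewrite [X in X + _ - _]mcoeff_bas [X in _ + X - _]mcoeff_bas [X in _ - X]mcoeff_bas.
rewrite [in X in X + _ - _]eq_keyDr [in X in _ + X - _]eq_keyDr.
rewrite [in X in _ - X]eq_keyDr.
by rewrite [in X in _ - X = _]xpair_eqE eqxx andbT.
Qed.

Lemma mcoeff_brkey_xpow_epsD g j k al0 be0 :
  (brkey F (0, g + eps j, j) k)@_(al0, be0 + g, j)
    - (brkey F (0, g, j) k)@_(al0, be0 + g - eps j, j)
  = - (k == (al0, be0, j))%:R.
Proof.
case: k => [[al be] i].
rewrite -{1}(addrK (eps j) (be0 + g)) -(addrA be0) !mcoeff_brkey_xpow.
rewrite [(g + eps j) i]ffunE intrD mulrnDl.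
set P := _ + _ *+ _; set Q := _ *+ _; set R := _ *+ _.
rewrite (_ : P - (Q + R) - (P - Q) = - R); last by ring.
rewrite /R ffunE; case: (i =P j) => [-> | /eqP i_neq_j].
  by rewrite !xpair_eqE (inj_eq (addIr _)) eqxx andbT.
by rewrite mulr0z mul0rn !xpair_eqE (negbTE i_neq_j) andbF oppr0.
Qed.

Lemma mcoeff_bracket_xpow_epsD g j al0 be0 v :
  (bracket (bas 1 0 (g + eps j) j) v)@_(al0, be0 + g, j)
    - (bracket (bas 1 0 g j) v)@_(al0, be0 + g - eps j, j)
  = - v@_(al0, be0, j).
Proof.
rewrite (mcoeff_bracket_bas1l 0 (g + eps j)) (mcoeff_bracket_bas1l 0 g) -sumrB.
rewrite [in RHS](monalgE v) raddf_sum -sumrN.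
apply: eq_bigr => k _.
by rewrite /= -mulrBr mcoeff_brkey_xpow_epsD mcoeffU mulrN mulr_natr.
Qed.

Lemma bracket_xpow_epsD_neq0 g j al0 be0 v : (al0, be0, j) \in msupp v ->
  bracket (bas 1 0 (g + eps j) j) v != 0 \/ bracket (bas 1 0 g j) v != 0.
Proof.
move=> K0_in; apply/orP; rewrite -negb_and.
apply: contraL K0_in => /andP [/eqP br'_eq0 /eqP br_eq0].
rewrite -mcoeff_eq0 -oppr_eq0 -(mcoeff_bracket_xpow_epsD g).
by rewrite [X in mcoeff _ X - _]br'_eq0 [X in _ - mcoeff _ X]br_eq0 !mcoeff0 subrr.
Qed.

Lemma msupp_bracket_xpow_gt0 (B : nat) g j v :
  (forall k, k \in msupp v -> forall t, `|k.1.2 t| <= B)%N ->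
  (forall t, (B + 2)%N%:Z <= g t) ->
  forall K, K \in msupp (bracket (bas 1 0 g j) v) -> forall t, 0 < K.1.2 t.
Proof.
move=> le_B g_ge K K_in t.
have ge_g k s : k \in msupp (bas (1 : F) 0 g j) -> (B + 2)%N%:Z <= k.1.2 s.
  by move/msupp_bas ->; apply: g_ge.
have ge_v k s : k \in msupp v -> - B%:Z <= k.1.2 s.
  by move/le_B/(_ s); lia.
by have := msupp_bracket_ge ge_g ge_v K_in t; lia.
Qed.

End Bracket.

Theorem lemma1 (F : fieldType) (hF : [pchar F] =i pred0) (n m : nat)
  (l : W F n m) (hl : l != 0) :
  exists l' : W F n m,
    [/\ in_ideal l l', l' != 0 &
        forall k : Wkey n m, k \in msupp l' ->
          forall t : 'I_(n + m), (0 < k.1.2 t)%R].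
Proof.
have [[[al0 be0] j] K0_in] : exists K0, K0 \in msupp l.
  apply/fset0Pn; apply: contra hl => /eqP supp_l.
  by rewrite (monalgE l) supp_l big_seq_fset0.
have [B le_B] := exists_bound_seq (msupp l) (fun k t => k.1.2 t).
pose g : {ffun 'I_(n + m) -> int} := [ffun => (B + 2)%N%:Z].
have g_ge t : (B + 2)%N%:Z <= g t by rewrite ffunE.
have gD_ge t : (B + 2)%N%:Z <= (g + eps j) t.
  by rewrite ffunE ler_wpDr ?g_ge // ffunE.
have [br_neq0 | br_neq0] := bracket_xpow_epsD_neq0 g K0_in.
  exists (bracket (bas 1 0 (g + eps j) j) l).
  by split; [apply/ideal_brl/ideal_gen | | apply: msupp_bracket_xpow_gt0 le_B gD_ge].
exists (bracket (bas 1 0 g j) l).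
by split; [apply/ideal_brl/ideal_gen | | apply: msupp_bracket_xpow_gt0 le_B g_ge].
Qed.
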